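(* Let $n,m,p\in\mathbb{N}$ with $m\ge p$, $A\in\mathbb{R}^{n\times n}$, $B\in\mathbb{R}^{n\times m}$, $C\in\mathbb{R}^{p\times n}$, and let $f:\mathbb{R}\times\mathbb{R}^n\times\mathbb{R}^m\to\mathbb{R}^n$ be continuous and bounded. Assume: (P1) $L\in\mathcal{C}^\infty(\mathbb{R}\to\mathbb{R}^{m\times m})$ is such that $L,\dot L,\ldots,L^{(n)}$ are bounded and there is $q\in\mathbb{N}$ with $\operatorname{rk} BL(t)=q\ge p$ for all $t\in\mathbb{R}$; (P2) there is $r\in\mathbb{N}$ such that $CA^kBL(t)=0$ for all $t$ and $CA^kf(t,x,u)=0$ for all $(t,x,u)$, for $k=0,\ldots,r-2$, and $\Gamma:=CA^{r-1}B$ satisfies $\operatorname{rk}\Gamma L(t)=p$ for all $t\in\mathbb{R}$. Suppose moreover that $q=p$. Then, with $\mathcal{B}(t)$, $\mathcal{C}$, $\mathcal{N}(t)$ as in the context, $$\Big(I_n-\mathcal{B}(t)\big(\mathcal{C}\mathcal{B}(t)\big)^\dagger\mathcal{C}\Big)\mathcal{B}(t)=0\quad\text{for all }t\in\mathbb{R},$$ and consequently $\mathcal{N}(t)\mathcal{B}(t)=0$ for all $t\in\mathbb{R}$.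
   Context: $M^\dagger$ denotes the Moore–Penrose pseudoinverse. For a matrix function $M$, $(\tfrac{d}{dt}-A)(M(t)):=\dot M(t)-AM(t)$, applied iteratively for powers. Define $\mathcal{B}(t):=\big[BL(t),(\tfrac{d}{dt}-A)(BL(t)),\ldots,(\tfrac{d}{dt}-A)^{r-1}(BL(t))\big]\in\mathbb{R}^{n\times rm}$; $\mathcal{C}:=[C^\top,(CA)^\top,\ldots,(CA^{r-1})^\top]^\top\in\mathbb{R}^{rp\times n}$; $\rho:=\operatorname{rk}\mathcal{C}$; $V\in\mathbb{R}^{n\times(n-\rho)}$ any matrix with $\operatorname{im}V=\ker\mathcal{C}$; $\mathcal{N}(t):=V^\dagger[I_n-\mathcal{B}(t)(\mathcal{C}\mathcal{B}(t))^\dagger\mathcal{C}]\in\mathbb{R}^{(n-\rho)\times n}$. *)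

From HB Require Import structures.
From mathcomp Require Import all_boot all_order all_algebra.
From mathcomp Require Import all_classical all_reals all_analysis.
Set Implicit Arguments. Unset Strict Implicit. Unset Printing Implicit Defensive.
Import Order.TTheory GRing.Theory Num.Theory.
Import numFieldNormedType.Exports.
Local Open Scope ring_scope.
Local Open Scope classical_set_scope.

(** Moore-Penrose conditions for X to be the pseudoinverse of A (real case,
    so conjugate transpose = transpose). *)
Definition is_pinv (R : realType) (a b : nat) (A : 'M[R]_(a, b)) (X : 'M[R]_(b, a)) : Prop :=
  [/\ A *m X *m A = A, X *m A *m X = X,
      (A *m X)^T = A *m X & (X *m A)^T = X *m A].

(** The Moore-Penrose pseudoinverse: the (unique) X satisfying the Penrose
    equations (it always exists over the reals). *)
Definition mx_pinv (R : realType) (a b : nat) (A : 'M[R]_(a, b)) : 'M[R]_(b, a) :=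
  xget 0 [set X | is_pinv A X].

Definition dmA (R : realType) (n k : nat) (A : 'M[R]_n) (M : R -> 'M[R]_(n, k)) :
  R -> 'M[R]_(n, k) := fun t => derive1 M t - A *m M t.

Definition calB (R : realType) (n m r : nat) (A : 'M[R]_n) (B : 'M[R]_(n, m))
  (L : R -> 'M[R]_m) (t : R) : 'M[R]_(n, \sum_(k < r) m) :=
  \mxrow_(k < r) iter k (dmA A) (fun s => B *m L s) t.

Definition calC (R : realType) (n p r : nat) (A : 'M[R]_n) (C : 'M[R]_(p, n)) :
  'M[R]_(\sum_(k < r) p, n) :=
  \mxcol_(k < r) (C *m A ^+ k).

Definition calN (R : realType) (n m p r : nat) (A : 'M[R]_n) (B : 'M[R]_(n, m))
  (C : 'M[R]_(p, n)) (L : R -> 'M[R]_m)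
  (V : 'M[R]_(n, n - \rank (calC r A C))) (t : R) : 'M[R]_(n - \rank (calC r A C), n) :=
  mx_pinv V *m (1%:M - calB r A B L t *m mx_pinv (calC r A C *m calB r A B L t) *m calC r A C).

From HB Require Import structures.
From mathcomp Require Import all_boot all_order all_algebra.
From mathcomp Require Import all_classical all_reals all_analysis.
From mathcomp Require Import zify.
Import Order.TTheory GRing.Theory Num.Theory.
Import numFieldNormedType.Exports.
Local Open Scope ring_scope.
Local Open Scope classical_set_scope.

Set Implicit Arguments. Unset Strict Implicit.

(* Write D := d/dt - A, F := B L, F_k := D^k F and Gamma := C A^(r-1) F.  Since
   rk F = rk Gamma = p and Gamma = (C A^(r-1)) F, the rows of Gamma span those of
   F, so F P = 0 for P := det(Gamma Gamma^T) (I - Gamma^T (Gamma Gamma^T)^-1 Gamma).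
   Applying D to F_k P and using the Leibniz rule D(X Y) = (D X) Y + X Y', each
   F_k P is a smooth combination of F_0, ..., F_(k-1); as
   det(Gamma Gamma^T) F_k = F_k Gamma^T adj(Gamma Gamma^T) Gamma + F_k P, every
   column of calB(t) lies in the span of the columns of F_i(t) Gamma(t)^T, i < r.
   On that span calC is injective: C A^j F_i vanishes for i + j + 2 <= r and
   equals (-1)^i Gamma for i + j + 1 = r, so calC is block anti-triangular there
   with invertible antidiagonal blocks +-Gamma Gamma^T.  Hence
   ker (calC calB) = ker calB, so the rows of calB lie in the row space of
   M := calC calB, and the Penrose identity M M^+ M = M gives
   calB M^+ M = calB. *)

Section PseudoInverse.
Variable R : realType.

Lemma mulmx_trmx_eq0 (a b : nat) (X : 'M[R]_(a, b)) : X *m X^T = 0 -> X = 0.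
Proof.
move=> XXt0; apply/matrixP => i j; rewrite mxE.
have /eqP : (X *m X^T) i i = 0 by rewrite XXt0 mxE.
rewrite mxE psumr_eq0 => [/allP/(_ j (mem_index_enum _))|l _]; rewrite mxE -expr2.
  by rewrite sqrf_eq0 => /eqP.
exact: sqr_ge0.
Qed.

Lemma row_free_mulmx_trmx_unit (a b : nat) (X : 'M[R]_(a, b)) :
  row_free X -> X *m X^T \in unitmx.
Proof.
move=> freeX; rewrite -row_free_unit -kermx_eq0 -(mulmx_free_eq0 _ freeX).
apply/eqP/mulmx_trmx_eq0.
by rewrite trmx_mul mulmxA -(mulmxA _ X) mulmx_ker mul0mx.
Qed.

Lemma is_pinv_mulmx (a b k : nat) (F : 'M[R]_(a, k)) (G : 'M[R]_(k, b)) :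
  row_free F^T -> row_free G ->
  is_pinv (F *m G) (G^T *m invmx (G *m G^T) *m invmx (F^T *m F) *m F^T).
Proof.
move=> freeF freeG.
have uF : F^T *m F \in unitmx by rewrite -{2}[F]trmxK row_free_mulmx_trmx_unit.
have uG := row_free_mulmx_trmx_unit freeG.
set X := _ *m F^T.
have FGX : F *m G *m X = F *m invmx (F^T *m F) *m F^T.
  by rewrite !mulmxA -(mulmxA F G) (mulmxK uG).
have XFG : X *m (F *m G) = G^T *m invmx (G *m G^T) *m G.
  by rewrite /X !mulmxA -(mulmxA _ F^T F) -(mulmxA _ (invmx _)) (mulVmx uF) mulmx1.
split.
- by rewrite FGX !mulmxA -(mulmxA _ F^T F) -(mulmxA _ (invmx _)) (mulVmx uF) mulmx1.
- by rewrite XFG /X !mulmxA -(mulmxA _ G G^T) (mulmxK uG).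
- by rewrite FGX !trmx_mul trmxK trmx_inv trmx_mul trmxK mulmxA.
- by rewrite XFG !trmx_mul trmxK trmx_inv trmx_mul trmxK mulmxA.
Qed.

Lemma mx_pinvP (a b : nat) (M : 'M[R]_(a, b)) : is_pinv M (mx_pinv M).
Proof.
apply: (xgetPex 0); rewrite -[M in [set X | is_pinv M X]]mulmx_base.
eexists; apply: is_pinv_mulmx; last exact: row_base_free.
by rewrite /row_free mxrank_tr; apply: col_base_full.
Qed.

Lemma mulmx_pinv_id (a b c : nat) (X : 'M[R]_(c, b)) (M : 'M[R]_(a, b)) :
  (X <= M)%MS -> X *m mx_pinv M *m M = X.
Proof.
case/submxP => D ->; have [MXM _ _ _] := mx_pinvP M.
by rewrite -!mulmxA [M *m _]mulmxA MXM.
Qed.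

End PseudoInverse.

Section Smooth.
Variables (R : realType) (V : normedModType R).
Implicit Types f g : R -> V.

Definition smooth f := forall k t, derivable (derive1n k f) t 1.

Lemma smooth_derivable f t : smooth f -> derivable f t 1.
Proof. by move=> /(_ 0%N t); rewrite derive1n0. Qed.

Lemma smooth_derive1 f : smooth f -> smooth (derive1 f).
Proof. by move=> sf k t; rewrite -derive1Sn. Qed.

Lemma smooth_cst (v : V) : smooth (fun=> v).
Proof.
suff derivn_cst k : exists w : V, derive1n k (cst v) = cst w.
  by move=> k t; have [w ->] := derivn_cst k; apply: derivable_cst.
elim: k => [|k [w IHk]]; first by exists v.
by exists 0; rewrite derive1nS IHk; apply/funext => t; apply: derive1_cst.
Qed.

Lemma derive1nD k f g :
  (forall i t, (i < k)%N -> derivable (derive1n i f) t 1) ->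
  (forall i t, (i < k)%N -> derivable (derive1n i g) t 1) ->
  derive1n k (f + g) = derive1n k f + derive1n k g.
Proof.
elim: k => // k IHk df dg; rewrite !derive1nS IHk => [|i t ik|i t ik]; last 2 first.
- exact/df/ltnW.
- exact/dg/ltnW.
apply/funext => t; rewrite derive1E deriveD.
- by rewrite -!derive1E.
- exact: df.
- exact: dg.
Qed.

Lemma smoothD f g : smooth f -> smooth g -> smooth (fun t => f t + g t).
Proof.
move=> sf sg k t; rewrite (derive1nD (f := f)) => [|i s _|i s _]; last 2 first.
- exact: sf.
- exact: sg.
by apply: derivableD; [apply: sf | apply: sg].
Qed.

Lemma smoothN f : smooth f -> smooth (fun t => - f t).
Proof.
move=> sf; suff dN k : derive1n k (- f) = - derive1n k f.
  by move=> k t; rewrite -/(- f) dN; apply/derivableN/sf.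
elim: k => // k IHk; rewrite !derive1nS IHk.
apply/funext => t; rewrite derive1E deriveN; last exact: sf.
by rewrite opprfctE /= derive1E.
Qed.

Lemma smoothB f g : smooth f -> smooth g -> smooth (fun t => f t - g t).
Proof. by move=> sf sg; apply/smoothD/smoothN. Qed.

Lemma smooth_sum (I : Type) (s : seq I) (P : pred I) (F : I -> R -> V) :
  (forall i, smooth (F i)) -> smooth (fun t => \sum_(i <- s | P i) F i t).
Proof.
move=> sF; rewrite -fct_sumE; elim/big_ind: _ => [|f g|i _].
- exact: smooth_cst.
- exact: smoothD.
- exact: sF.
Qed.

End Smooth.

Section SmoothScalar.
Variable R : realType.
Implicit Types f g : R -> R.

Lemma smoothM f g : smooth f -> smooth g -> smooth (fun t => f t * g t).
Proof.
move=> + + k; elim/ltn_ind: k f g => -[|k] IHk f g sf sg t.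
  exact: derivableM (smooth_derivable sf) (smooth_derivable sg).
have sf' := smooth_derive1 sf; have sg' := smooth_derive1 sg.
rewrite derive1Sn; have -> : derive1 (fun t => f t * g t) =
          (fun t => derive1 f t * g t) + (fun t => f t * derive1 g t).
  apply/funext => s.
  rewrite derive1E (deriveM (smooth_derivable sf) (smooth_derivable sg)).
  by rewrite addrfctE /= addrC !derive1E (mulrC ('D_1 f s)).
rewrite derive1nD => [|j s jk|j s jk]; last 2 first.
- by apply: IHk => //; apply: ltnW.
- by apply: IHk => //; apply: ltnW.
by apply: derivableD; apply: IHk.
Qed.

Lemma smooth_prod (I : Type) (s : seq I) (P : pred I) (F : I -> R -> R) :
  (forall i, smooth (F i)) -> smooth (fun t => \prod_(i <- s | P i) F i t).
Proof.
move=> sF; elim: s => [|a s IHs].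
  rewrite (_ : (fun t => _) = fun=> 1); last by apply/funext => t; rewrite big_nil.
  exact: smooth_cst.
rewrite (_ : (fun t => _) =
    fun t => (if P a then F a t else 1) * \prod_(i <- s | P i) F i t); last first.
  by apply/funext => t; rewrite big_cons; case: (P a); rewrite ?mul1r.
apply: (smoothM _ IHs).
by case: (P a); [exact: sF | exact: smooth_cst].
Qed.

End SmoothScalar.

Section SmoothMatrix.
Variable R : realType.
Implicit Types (a b c : nat).

Lemma derive1_mxE a b (F : R -> 'M[R]_(a, b)) t i j :
  derivable F t 1 -> derive1 F t i j = derive1 (fun s => F s i j) t.
Proof. by move=> dF; rewrite !derive1E derive_mx // mxE. Qed.

Lemma derive1n_mxE a b (F : R -> 'M[R]_(a, b)) k t i j :
  smooth F -> derive1n k F t i j = derive1n k (fun s => F s i j) t.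
Proof.
move=> sF; elim: k t => // k IHk t.
rewrite !derive1nS derive1_mxE; last exact: sF.
by congr (derive1 _ t); apply/funext => s; apply: IHk.
Qed.

Lemma derivable_matrix a b (h : 'I_a -> 'I_b -> R -> R) t :
  (forall i j, derivable (h i j) t 1) -> derivable (fun s => \matrix_(i, j) h i j s) t 1.
Proof.
move=> dh; apply/derivable_mxP => i j.
rewrite (_ : (fun s => _) = h i j); first exact: dh.
by apply/funext => s; rewrite mxE.
Qed.

Lemma smooth_mxP a b (F : R -> 'M[R]_(a, b)) :
  smooth F <-> forall i j, smooth (fun t => F t i j).
Proof.
split=> [sF i j k t | sF].
  have <- : (fun s => derive1n k F s i j) = derive1n k (fun s => F s i j).
    by apply/funext => s; apply: derive1n_mxE.
  by move/derivable_mxP: (sF k t); apply.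
suff derivnE k : derive1n k F = fun t => \matrix_(i, j) derive1n k (fun s => F s i j) t.
  by move=> k t; rewrite derivnE; apply: derivable_matrix => i j; apply: sF.
elim: k => [|k IHk]; first by apply/funext => t; apply/matrixP => i j; rewrite mxE.
rewrite derive1nS IHk; apply/funext => t; apply/matrixP => i j.
rewrite derive1_mxE ?mxE; last by apply: derivable_matrix => i' j'; apply: sF.
by rewrite derive1nS; congr (derive1 _ t); apply/funext => s; rewrite mxE.
Qed.

Lemma smooth_mulmx a b c (F : R -> 'M[R]_(a, b)) (G : R -> 'M[R]_(b, c)) :
  smooth F -> smooth G -> smooth (fun t => F t *m G t).
Proof.
move=> /smooth_mxP sF /smooth_mxP sG; apply/smooth_mxP => i j.
rewrite (_ : (fun t => _) = fun t => \sum_l F t i l * G t l j); last first.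
  by apply/funext => t; rewrite mxE.
by apply: smooth_sum => l; exact: smoothM (sF i l) (sG l j).
Qed.

Lemma smoothZ a b (c : R -> R) (F : R -> 'M[R]_(a, b)) :
  smooth c -> smooth F -> smooth (fun t => c t *: F t).
Proof.
move=> sc /smooth_mxP sF; apply/smooth_mxP => i j.
rewrite (_ : (fun t => _) = fun t => c t * F t i j); last first.
  by apply/funext => t; rewrite mxE.
exact: smoothM sc (sF i j).
Qed.

Lemma smooth_trmx a b (F : R -> 'M[R]_(a, b)) : smooth F -> smooth (fun t => (F t)^T).
Proof.
move=> /smooth_mxP sF; apply/smooth_mxP => i j.
rewrite (_ : (fun t => _) = fun t => F t j i); first exact: sF.
by apply/funext => t; rewrite mxE.
Qed.

Lemma smooth_det a (F : R -> 'M[R]_a) : smooth F -> smooth (fun t => \det (F t)).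
Proof.
move=> /smooth_mxP sF; apply: smooth_sum => s.
by apply: smoothM; [exact: smooth_cst | apply: smooth_prod => i; apply: sF].
Qed.

Lemma smooth_adj a (F : R -> 'M[R]_a) : smooth F -> smooth (fun t => \adj (F t)).
Proof.
move=> sF; apply/smooth_mxP => i j.
rewrite (_ : (fun t => _) =
    fun t => (-1) ^+ (j + i) * \det (row' j (col' i (F t)))); last first.
  by apply/funext => t; rewrite mxE.
apply: smoothM; first exact: smooth_cst.
apply: smooth_det; apply/smooth_mxP => k l.
rewrite (_ : (fun t => _) = fun t => F t (lift j k) (lift i l)); last first.
  by apply/funext => t; rewrite !mxE.
exact: (iffLR (smooth_mxP F) sF).
Qed.

Lemma derive1_mulmx a b c (F : R -> 'M[R]_(a, b)) (G : R -> 'M[R]_(b, c)) t :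
  smooth F -> smooth G ->
  derive1 (fun s => F s *m G s) t = derive1 F t *m G t + F t *m derive1 G t.
Proof.
move=> sF sG; apply/matrixP => i j.
rewrite derive1_mxE; last exact/smooth_derivable/smooth_mulmx.
rewrite !mxE (_ : (fun s => _) = \sum_l (fun s => F s i l * G s l j)); last first.
  by rewrite fct_sumE; apply/funext => s; rewrite mxE.
have /smooth_mxP sFij := sF; have /smooth_mxP sGij := sG.
rewrite derive1E derive_sum => [|l]; last first.
  exact: derivableM (smooth_derivable (sFij _ _)) (smooth_derivable (sGij _ _)).
rewrite -big_split; apply: eq_bigr => l _ /=.
rewrite deriveM; [|exact: smooth_derivable (sFij _ _)|exact: smooth_derivable (sGij _ _)].
rewrite derive1_mxE ?derive1_mxE; try exact: smooth_derivable.
by rewrite !derive1E addrC; congr (_ + _); apply: mulrC.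
Qed.

End SmoothMatrix.

Section Leibniz.
Variables (R : realType) (n : nat) (A : 'M[R]_n).

Lemma smooth_dmA c (X : R -> 'M[R]_(n, c)) : smooth X -> smooth (dmA A X).
Proof.
move=> sX; apply: smoothB; first exact: smooth_derive1.
exact: smooth_mulmx (@smooth_cst _ _ A) sX.
Qed.

Lemma dmA_mulmx a b (X : R -> 'M[R]_(n, a)) (Y : R -> 'M[R]_(a, b)) t :
  smooth X -> smooth Y ->
  dmA A (fun s => X s *m Y s) t = dmA A X t *m Y t + X t *m derive1 Y t.
Proof.
by move=> sX sY; rewrite /dmA (derive1_mulmx t sX sY) mulmxBl mulmxA addrAC.
Qed.

Lemma dmA_sum c k (X : 'I_k -> R -> 'M[R]_(n, c)) t :
  (forall i, smooth (X i)) ->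
  dmA A (fun s => \sum_(i < k) X i s) t = \sum_(i < k) dmA A (X i) t.
Proof.
move=> sX; rewrite /dmA -fct_sumE derive1E derive_sum => [|i]; last first.
  exact: smooth_derivable.
by rewrite mulmx_sumr -sumrB; apply: eq_bigr => i _; rewrite derive1E.
Qed.

End Leibniz.

Section Blocks.
Variables (R : realType) (n m p r : nat) (A : 'M[R]_n) (C : 'M[R]_(p, n)).
Variable F : R -> 'M[R]_(n, m).
Hypothesis smooth_F : smooth F.
Hypothesis CAF_eq0 : forall k, (k.+2 <= r)%N -> forall t, C *m A ^+ k *m F t = 0.

Definition Fk k := iter k (dmA A) F.

Definition Gamma t := C *m A ^+ r.-1 *m F t.

Lemma smooth_Fk k : smooth (Fk k).
Proof. by elim: k => [|k IHk]; [exact: smooth_F | exact: smooth_dmA]. Qed.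

Lemma CA_FkS i j t :
  C *m A ^+ j *m Fk i.+1 t =
  derive1 (fun s => C *m A ^+ j *m Fk i s) t - C *m A ^+ j.+1 *m Fk i t.
Proof.
rewrite /= /dmA mulmxBr derive1_mulmx; [|exact: smooth_cst|exact: smooth_Fk].
by rewrite derive1_cst mul0mx add0r exprSr !mulmxA.
Qed.

Lemma CA_Fk_eq0 i j t : ((i + j).+2 <= r)%N -> C *m A ^+ j *m Fk i t = 0.
Proof.
elim: i j t => [|i IHi] j t hij; first exact: CAF_eq0.
rewrite CA_FkS IHi ?subr0; last by rewrite addnS -addSn.
rewrite (_ : (fun s => _) = fun=> 0); first exact: derive1_cst.
by apply/funext => s; apply: IHi; rewrite -addSn ltnW.
Qed.

Lemma CA_Fk_antidiag i j t :
  (i + j).+1 = r -> C *m A ^+ j *m Fk i t = (-1) ^+ i *: Gamma t.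
Proof.
elim: i j t => [|i IHi] j t hij; first by rewrite scale1r /Gamma -hij.
rewrite CA_FkS IHi; last by rewrite addnS -addSn.
rewrite (_ : (fun s => _) = fun=> 0); last first.
  by apply/funext => s; apply: CA_Fk_eq0; rewrite -addSn hij.
by rewrite derive1_cst sub0r exprS mulN1r scaleNr.
Qed.

Hypothesis rank_Gamma : forall t, \rank (Gamma t) = p.
Hypothesis rank_F : forall t, \rank (F t) = p.

Definition Gram t := Gamma t *m (Gamma t)^T.

(* [det (Gram t)] times the orthogonal projector onto the kernel of [Gamma t];
   using the adjugate instead of the inverse keeps it visibly smooth. *)
Definition Pker t := \det (Gram t) *: 1%:M - (Gamma t)^T *m \adj (Gram t) *m Gamma t.

Lemma Gram_unit t : Gram t \in unitmx.
Proof. by apply: row_free_mulmx_trmx_unit; rewrite /row_free rank_Gamma. Qed.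

Lemma smooth_Gamma : smooth Gamma.
Proof. exact: smooth_mulmx (@smooth_cst _ _ _) smooth_F. Qed.

Lemma smooth_Pker : smooth Pker.
Proof.
have sG := smooth_Gamma; have sGt := smooth_trmx sG.
have sGram : smooth Gram := smooth_mulmx sG sGt.
apply: smoothB; first exact: smoothZ (smooth_det sGram) (@smooth_cst _ _ _).
exact: smooth_mulmx (smooth_mulmx sGt (smooth_adj sGram)) sG.
Qed.

Lemma Gamma_Pker t : Gamma t *m Pker t = 0.
Proof.
rewrite /Pker mulmxBr (mulmxA (Gamma t) _ (Gamma t)) (mulmxA (Gamma t)) mul_mx_adj.
by rewrite mul_scalar_mx -scalemxAr mulmx1 subrr.
Qed.

Lemma F_Pker t : F t *m Pker t = 0.
Proof.
have sGF : (Gamma t <= F t)%MS by rewrite /Gamma submxMl.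
have := (mxrank_leqif_sup sGF).2; rewrite rank_Gamma rank_F eqxx => /esym/submxP [D ->].
by rewrite -mulmxA Gamma_Pker mulmx0.
Qed.

Lemma Fk_Pker_comb k : exists Z : nat -> R -> 'M[R]_m, (forall i, smooth (Z i)) /\
  forall t, Fk k t *m Pker t = \sum_(i < k) Fk i t *m Z i t.
Proof.
elim: k => [|k [Z [sZ FkP]]].
  by exists (fun _ _ => 0); split => [i|t]; [exact: smooth_cst | rewrite big_ord0 F_Pker].
(* the new coefficients come from applying [dmA A] to both sides of [FkP] *)
pose Zup i t := if i is j.+1 then Z j t else 0.
pose Zd i t := if (i < k)%N then derive1 (Z i) t else - derive1 Pker t.
exists (fun i t => Zup i t + Zd i t); split=> [i|t].
  apply: smoothD; first by case: i => [|j]; [exact: smooth_cst | exact: sZ].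
  rewrite /Zd; case: (i < k)%N; first exact/smooth_derive1.
  exact/smoothN/smooth_derive1/smooth_Pker.
have sFk := smooth_Fk; have sP := smooth_Pker.
have dFkP : dmA A (fun s => Fk k s *m Pker s) t =
            Fk k.+1 t *m Pker t + Fk k t *m derive1 Pker t.
  by rewrite (dmA_mulmx A t (sFk k) sP).
rewrite (_ : (fun s => _) = fun s => \sum_(i < k) Fk i s *m Z i s) in dFkP; last first.
  exact/funext.
rewrite dmA_sum in dFkP; last by move=> i; exact: smooth_mulmx (sFk i) (sZ i).
have -> : Fk k.+1 t *m Pker t =
    \sum_(i < k) (Fk i.+1 t *m Z i t + Fk i t *m derive1 (Z i) t)
    - Fk k t *m derive1 Pker t.
  rewrite -[LHS](addrK (Fk k t *m derive1 Pker t)) -dFkP; congr (_ - _).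
  by apply: eq_bigr => i _; rewrite (dmA_mulmx A t (sFk i) (sZ i)).
have shift : \sum_(i < k.+1) Fk i t *m Zup i t = \sum_(i < k) Fk i.+1 t *m Z i t.
  by rewrite big_ord_recl mulmx0 add0r.
have top : \sum_(i < k.+1) Fk i t *m Zd i t =
           \sum_(i < k) Fk i t *m derive1 (Z i) t - Fk k t *m derive1 Pker t.
  rewrite big_ord_recr /= /Zd ltnn mulmxN; congr (_ - _).
  by apply: eq_bigr => i _; rewrite ltn_ord.
rewrite big_split /= -addrA -top -shift -big_split /=.
by apply: eq_bigr => i _; rewrite mulmxDr.
Qed.

Definition Fk_span t := (\sum_(i < r) <<Gamma t *m (Fk i t)^T>>)%MS.

Lemma trFk_sub_span k t : (k < r)%N -> ((Fk k t)^T <= Fk_span t)%MS.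
Proof.
elim/ltn_ind: k => k IHk kr; have [Z [_ FkP]] := Fk_Pker_comb k.
have dN0 : \det (Gram t) != 0 by rewrite -unitfE -unitmxE Gram_unit.
have decomp : \det (Gram t) *: Fk k t =
    Fk k t *m (Gamma t)^T *m \adj (Gram t) *m Gamma t + \sum_(i < k) Fk i t *m Z i t.
  by rewrite -FkP /Pker mulmxBr -scalemxAr mulmx1 !mulmxA addrC subrK.
rewrite -(scalerK dN0 (Fk k t)) decomp linearZ /= scalemx_sub // linearD /=.
rewrite addmx_sub //.
  (* abstracted so that [trmx_mul] cannot unfold [Gamma t] *)
  rewrite /Fk_span; move: (\adj (Gram t)) => D; move: (Gamma t) => G.
  rewrite !trmx_mul trmxK mulmxA; apply: submx_trans (submxMl _ _) _.
  by rewrite (sumsmx_sup (Ordinal kr)) ?genmxE.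
rewrite linear_sum /= summx_sub // => i _; rewrite trmx_mul.
by apply: submx_trans (submxMl _ _) (IHk _ _ _) => //; apply: ltn_trans kr.
Qed.

Lemma Fk_span_calC_eq0 c t (X : 'M[R]_(n, c)) :
  (X^T <= Fk_span t)%MS -> calC r A C *m X = 0 -> X = 0.
Proof.
move=> /sub_sums_genmxP [u eX] CX0; pose U i := (u i)^T.
have {}eX : X = \sum_(i < r) Fk i t *m (Gamma t)^T *m U i.
  rewrite -[X]trmxK eX linear_sum /=; apply: eq_bigr => i _.
  by rewrite trmx_mul (trmx_mul (Gamma t)) trmxK.
have CAX0 (j : 'I_r) : \sum_(i < r) C *m A ^+ j *m Fk i t *m (Gamma t)^T *m U i = 0.
  have := congr1 (fun M => submxcol M j) CX0.
  rewrite /calC mxcol_mul mxcolK submxcol0 eX.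
  by rewrite mulmx_sumr; under eq_bigr do rewrite !mulmxA.
suff U0 : forall i, U i = 0 by rewrite eX big1 // => i _; rewrite U0 mulmx0.
(* back-substitution from the last block, using the anti-triangular structure *)
suff top k (i : 'I_r) : (r <= i + k)%N -> U i = 0.
  by move=> i; apply: (top r); rewrite leq_addl.
elim: k i => [|k IHk] i rik; first by move: rik; rewrite addn0 leqNgt ltn_ord.
have [/IHk //|ikr] := leqP r (i + k).
have kr : (k < r)%N by lia.
have := CAX0 (Ordinal kr); rewrite (bigD1 i) //= big1 => [|i' ne_i'i]; last first.
  have [i'kr|ri'k] := leqP (i' + k).+2 r; first by rewrite CA_Fk_eq0 // !mul0mx.
  by rewrite IHk ?mulmx0 //; move: ne_i'i; rewrite -val_eqE /=; lia.
rewrite addr0 CA_Fk_antidiag; last by lia.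
rewrite -!scalemxAl -/(Gram t) => /eqP; rewrite scaler_eq0 signr_eq0 /= => /eqP.
by move/(congr1 (mulmx (invmx (Gram t)))); rewrite mulKmx ?Gram_unit // mulmx0.
Qed.

Lemma mxrow_Fk_sub_calC t :
  (\mxrow_(k < r) Fk k t <= calC r A C *m \mxrow_(k < r) Fk k t)%MS.
Proof.
rewrite submxE; apply/eqP/(Fk_span_calC_eq0 (t := t)); last by rewrite mulmxA mulmx_coker.
rewrite -[cokermx _]submxcolK mul_mxrow_mxcol linear_sum /= summx_sub // => k _.
by rewrite trmx_mul; apply: submx_trans (submxMl _ _) (trFk_sub_span _ (ltn_ord k)).
Qed.

End Blocks.

Theorem lemma3 (R : realType) (n m p : nat) (hmp : (p <= m)%N)
  (A : 'M[R]_n) (B : 'M[R]_(n, m)) (C : 'M[R]_(p, n))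
  (f : R -> 'cV[R]_n -> 'cV[R]_m -> 'cV[R]_n)
  (f_cont : continuous (fun z : R * 'cV[R]_n * 'cV[R]_m => f z.1.1 z.1.2 z.2))
  (f_bnd : exists M : R, forall t x u, `|f t x u| <= M)
  (L : R -> 'M[R]_m)
  (* (P1) *)
  (L_smooth : forall (k : nat) (t : R), derivable (derive1n k L) t 1)
  (L_bnd : forall k : nat, (k <= n)%N -> exists M : R, forall t, `|derive1n k L t| <= M)
  (q : nat) (hq : forall t, \rank (B *m L t) = q) (hpq : (p <= q)%N)
  (* (P2) *)
  (r : nat) (hr : (0 < r)%N)
  (hCAB : forall k : nat, (k.+2 <= r)%N -> forall t, C *m A ^+ k *m B *m L t = 0)
  (hCAf : forall k : nat, (k.+2 <= r)%N -> forall t x u, C *m A ^+ k *m f t x u = 0)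
  (hGamma : forall t, \rank (C *m A ^+ r.-1 *m B *m L t) = p)
  (* moreover *)
  (hqp : q = p) :
  (forall t : R,
     (1%:M - calB r A B L t *m mx_pinv (calC r A C *m calB r A B L t) *m calC r A C)
       *m calB r A B L t = 0)
  /\
  (forall V : 'M[R]_(n, n - \rank (calC r A C)),
     (* im V = ker calC, expressed through row spaces of transposes *)
     (V^T == kermx (calC r A C)^T)%MS ->
     forall t : R, calN B L V t *m calB r A B L t = 0).
Proof.
have smooth_BL : smooth (fun t => B *m L t) := smooth_mulmx (@smooth_cst _ _ B) L_smooth.
have CABL_eq0 k (hk : (k.+2 <= r)%N) t : C *m A ^+ k *m (B *m L t) = 0.
  by rewrite mulmxA hCAB.
have rank_Gamma t : \rank (C *m A ^+ r.-1 *m (B *m L t)) = p by rewrite mulmxA hGamma.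
have rank_BL t : \rank (B *m L t) = p by rewrite hq hqp.
have calB_annihilated t : (1%:M - calB r A B L t *m mx_pinv (calC r A C *m calB r A B L t)
    *m calC r A C) *m calB r A B L t = 0.
  have /mulmx_pinv_id := mxrow_Fk_sub_calC smooth_BL CABL_eq0 rank_Gamma rank_BL t.
  by rewrite mulmxBl mul1mx -(mulmxA _ (calC r A C)) => ->; rewrite subrr.
by split=> // V _ t; rewrite /calN -mulmxA calB_annihilated mulmx0.
Qed.
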